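(* Let $k\ge 2$ be an integer and $n\in\mathbb{Z}$. Then $L_k^{(n)}=Q_k^{n}L_k^{(0)}=L_k^{(0)}Q_k^{n}$.
   Context: Fix an integer $k\ge2$. The generalized Fibonacci sequence of order $k$, $(f_{k,n})_{n\in\mathbb Z}$, is the two-sided integer sequence with $f_{k,0}=f_{k,1}=\dots=f_{k,k-2}=0$, $f_{k,k-1}=1$, and $f_{k,n+k}=f_{k,n+k-1}+f_{k,n+k-2}+\dots+f_{k,n}$ for all $n\in\mathbb Z$. For $n\in\mathbb Z$, the generalized Fibonacci matrix $Q_k^n$ is the $k\times k$ matrix with entries $(Q_k^n)_{i,1}=f_{k,k+n-i}$ and $(Q_k^n)_{i,j}=\sum_{m=n-i+j-1}^{k+n-i-1} f_{k,m}$ for $2\le j\le k$, $1\le i\le k$. In particular $Q_k=Q_k^1$ is the matrix whose first row is all ones, with $(Q_k)_{i+1,i}=1$ for $1\le i\le k-1$ and all other entries $0$; it is known that $Q_k^n$ equals the $n$-th power of $Q_k$ for every $n\in\mathbb Z$ (with $Q_k^0=I_k$), and $\det Q_k^n=(-1)^{(k-1)n}$. The generalized Lucas sequence of order $k$, $(l_{k,n})_{n\in\mathbb Z}$, is the two-sided sequence satisfying $l_{k,n+k}=l_{k,n+k-1}+\dots+l_{k,n}$ for all $n\in\mathbb Z$ with initial values $l_{k,r}=\operatorname{trace}(Q_k^r)$ for $0\le r\le k-1$ (so $l_{k,0}=k$ and $l_{k,r}=2^r-1$ for $1\le r\le k-1$). For $n\in\mathbb Z$ the generalized Lucas matrix $L_k^{(n)}$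 is the $k\times k$ matrix with entries $(L_k^{(n)})_{i,1}=l_{k,k+n-i}$ and $(L_k^{(n)})_{i,j}=\sum_{m=n-i+j-1}^{k+n-i-1} l_{k,m}$ for $2\le j\le k$, $1\le i\le k$. *)

From mathcomp Require Import all_boot all_order all_algebra.
Set Implicit Arguments. Unset Strict Implicit. Unset Printing Implicit Defensive.
Import Order.TTheory GRing.Theory Num.Theory.
Local Open Scope ring_scope.

Definition zsum (a b : int) (s : int -> int) : int :=
  \sum_(t < (if a <= b then `|(b - a + 1)%R|%N else 0%N)) s (a + t%:Z).

(* The k x k matrix built from a two-sided sequence s, following the paper's
   entry formulas with 1-based indices i_p = i+1, j_p = j+1:
     (M)_{i_p,1}   = s (k + n - i_p)
     (M)_{i_p,j_p} = \sum_{m = n - i_p + j_p - 1}^{k + n - i_p - 1} s m   (j_p >= 2).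
   With s = f_k this is Q_k^n; with s = l_k it is L_k^{(n)}. *)
Definition genmat (k : nat) (s : int -> int) (n : int) : 'M[int]_k :=
  \matrix_(i < k, j < k)
    (if (j : nat) == 0%N then s (k%:Z + n - (i%:Z + 1))
     else zsum (n - (i%:Z + 1) + (j%:Z + 1) - 1) (k%:Z + n - (i%:Z + 1) - 1) s).

From mathcomp Require Import all_boot all_order all_algebra.
From mathcomp Require Import zify ring.
Import Order.TTheory GRing.Theory Num.Theory.
Local Open Scope ring_scope.
Set Implicit Arguments. Unset Strict Implicit.

(* For a sequence s satisfying the order-k Fibonacci recurrence write M_s(n) for the
   matrix [genmat k s n]; thus Q_k^n = M_f(n) and L_k^(n) = M_l(n). The recurrence gives
   M_s(n+1) = Q_k M_s(n) = M_s(n) Q_k, and the initial values of f give M_f(0) = 1, so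
   M_f(-1) is a two-sided inverse of Q_k. Hence n |-> M_l(n) and n |-> M_f(n) M_l(0) are
   orbits of the invertible map X |-> Q_k X agreeing at n = 0, so they agree on all of Z;
   symmetrically on the right. The initial values of l play no role. *)

Lemma eq_orbit_mulmx (R : pzRingType) (m : nat) (Q V : 'M[R]_m)
    (A B : int -> 'M[R]_m) :
  V *m Q = 1%:M ->
  (forall n, A (n + 1) = Q *m A n) -> (forall n, B (n + 1) = Q *m B n) ->
  A 0 = B 0 -> forall n, A n = B n.
Proof.
move=> VQ1 AS BS AB0; elim/int_rect => [//|n IHn|n IHn].
  by rewrite -addn1 PoszD AS BS IHn.
have Qinj X Y : Q *m X = Q *m Y -> X = Y.
  by move=> QXY; rewrite -[X]mul1mx -[Y]mul1mx -VQ1 -!mulmxA QXY.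
by apply: Qinj; rewrite -AS -BS (_ : - n.+1%:Z + 1 = - n%:Z) //; lia.
Qed.

Lemma eq_orbit_mulmxr (R : comPzRingType) (m : nat) (Q V : 'M[R]_m)
    (A B : int -> 'M[R]_m) :
  Q *m V = 1%:M ->
  (forall n, A (n + 1) = A n *m Q) -> (forall n, B (n + 1) = B n *m Q) ->
  A 0 = B 0 -> forall n, A n = B n.
Proof.
move=> QV1 AS BS AB0 n; apply: trmx_inj; move: n.
apply: (@eq_orbit_mulmx _ _ Q^T V^T) => [|n|n|]; last by rewrite AB0.
- by rewrite -trmx_mul QV1 trmx1.
- by rewrite AS trmx_mul.
- by rewrite BS trmx_mul.
Qed.

Section Companion.

Variables (R : pzRingType) (K : nat).

Definition fibQ : 'M[R]_K.+1 :=
  \matrix_(i, j) ((i == 0 :> nat)%:R + (i == j.+1 :> nat)%:R).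

Lemma mul_fibQmx (A : 'M[R]_K.+1) i j :
  (fibQ *m A) i j = if i == 0 :> nat then \sum_m A m j else A (inord i.-1) j.
Proof.
rewrite mxE; case: i => [[|i] lt_i] /=.
  by apply: eq_bigr => m _; rewrite mxE /= addr0 mul1r.
under eq_bigr do rewrite mxE /= add0r eqSS mulr_natl mulrb eq_sym.
rewrite -big_mkcond (eq_bigr (fun m : 'I_K.+1 => A (inord m) j)) => [|m _].
  by rewrite (big_ord1_eq _ (fun m : nat => A (inord m) j)) ltnW.
by rewrite inord_val.
Qed.

Lemma mulmx_fibQ (A : 'M[R]_K.+1) i j :
  (A *m fibQ) i j = A i ord0 + (if (j.+1 < K.+1)%N then A i (inord j.+1) else 0).
Proof.
rewrite mxE; under eq_bigr do rewrite mxE mulrDr !mulr_natr !mulrb.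
rewrite big_split -!big_mkcond /= (big_pred1 ord0) //.
rewrite (eq_bigr (fun m : 'I_K.+1 => A i (inord m))) => [|m _].
  by rewrite (big_ord1_eq _ (fun m : nat => A i (inord m))).
by rewrite inord_val.
Qed.

End Companion.

Lemma zsum_ord (a : int) (n : nat) (s : int -> int) :
  zsum a (a + n%:Z - 1) s = \sum_(t < n) s (a + t%:Z).
Proof.
rewrite /zsum; case: n => [|n]; first by rewrite ifF ?big_ord0 //; lia.
by rewrite ifT; [have -> : a + n.+1%:Z - 1 - a + 1 = n.+1%:Z by lia | lia].
Qed.

Definition kfib_rec (k : nat) (s : int -> int) :=
  forall m : int, s (m + k%:Z) = zsum m (m + k%:Z - 1) s.

Lemma kfib_recE k s m : kfib_rec k s -> s (m + k%:Z) = \sum_(t < k) s (m + t%:Z).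
Proof. by move=> hs; rewrite hs zsum_ord. Qed.

Lemma genmat_sumE k s n : kfib_rec k s ->
  genmat k s n = \matrix_(i, j) \sum_(t < k - j) s (n - i%:Z + j%:Z - 1 + t%:Z).
Proof.
move=> hs; apply/matrixP => i j; rewrite !mxE; case: eqP => [-> | _].
  rewrite subn0 (_ : k%:Z + n - (i%:Z + 1) = n - i%:Z - 1 + k%:Z); last by ring.
  by rewrite kfib_recE //; apply: eq_bigr => t _; congr s; lia.
have lt_jk := ltn_ord j.
rewrite (_ : n - (i%:Z + 1) + (j%:Z + 1) - 1 = n - i%:Z + j%:Z - 1); last by ring.
rewrite (_ : k%:Z + n - (i%:Z + 1) - 1 = n - i%:Z + j%:Z - 1 + (k - j)%N%:Z - 1).
  by rewrite zsum_ord.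
by lia.
Qed.

Section Shift.

Variables (K : nat) (s : int -> int).
Hypothesis s_rec : kfib_rec K.+1 s.

Lemma genmatS_mull n : genmat K.+1 s (n + 1) = fibQ int K *m genmat K.+1 s n.
Proof.
rewrite !genmat_sumE //; apply/matrixP => i j; rewrite mul_fibQmx !mxE.
case: ifP => [/eqP i0 | /negbT i_neq0]; last first.
  have lt_iK := ltn_ord i.
  by rewrite inordK; [apply: eq_bigr => t _; congr s; lia | lia].
under [RHS]eq_bigr do rewrite mxE.
rewrite exchange_big /=; apply: eq_bigr => t _.
rewrite (reindex_inj rev_ord_inj) /= i0.
rewrite (_ : n + 1 - 0%:Z + j%:Z - 1 + t%:Z = n + j%:Z + t%:Z - K.+1%:Z + K.+1%:Z).
  by rewrite kfib_recE //; apply: eq_bigr => m _; congr s; have := ltn_ord m; lia.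
by ring.
Qed.

Lemma genmatS_mulr n : genmat K.+1 s (n + 1) = genmat K.+1 s n *m fibQ int K.
Proof.
rewrite !genmat_sumE //; apply/matrixP => i j; rewrite mulmx_fibQ !mxE.
have lt_jK := ltn_ord j.
rewrite subSn // big_ord_recr /= addrC; congr (_ + _).
  rewrite /= subn0 (_ : n + 1 - i%:Z + j%:Z - 1 + (K - j)%N%:Z = n - i%:Z - 1 + K.+1%:Z).
    by rewrite kfib_recE //; apply: eq_bigr => t _; congr s; lia.
  by lia.
case: ifP => [lt_jSK | /negbT]; last first.
  by rewrite -leqNgt => le_Kj; rewrite (_ : K - j = 0)%N ?big_ord0 //; lia.
by rewrite inordK // subSS; apply: eq_bigr => t _; congr s; lia.
Qed.

End Shift.

Section FibonacciInit.

Variables (K : nat) (f : int -> int).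
Hypothesis f_zero : forall r : nat, (r < K)%N -> f r%:Z = 0.
Hypothesis f_one : f K%:Z = 1.
Hypothesis f_rec : kfib_rec K.+1 f.

Lemma sum_fib_window p : (0 < p <= K.+1)%N ->
  \sum_(t < p) f (- p%:Z + t%:Z) = (p == 1%N)%:R.
Proof.
case/andP=> p_gt0 le_pK.
have tail0 : \sum_(p <= t < K.+1) f (- p%:Z + t%:Z) = 0.
  rewrite big_nat_cond big1 // => t /andP[/andP[le_pt lt_tK] _].
  by rewrite (_ : - p%:Z + t%:Z = (t - p)%N%:Z) ?f_zero //; lia.
have := kfib_recE (- p%:Z) f_rec.
rewrite -(big_mkord xpredT (fun t => f (- p%:Z + t%:Z))) (big_cat_nat (n := p)) //=.
rewrite tail0 addr0 big_mkord => <-.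
rewrite (_ : - p%:Z + K.+1%:Z = (K.+1 - p)%N%:Z); last by lia.
by case: (p =P 1%N) => [-> | p_neq1]; rewrite ?subSS ?subn0 ?f_one ?f_zero //; lia.
Qed.

Lemma genmat_fib0 : genmat K.+1 f 0 = 1%:M.
Proof.
have f_vanish (a : int) : 0 <= a < K%:Z -> f a = 0.
  by case: a => // a /andP[_ lt_aK]; apply: f_zero.
rewrite genmat_sumE //; apply/matrixP => i j; rewrite !mxE.
have lt_iK := ltn_ord i; have lt_jK := ltn_ord j.
case: (ltnP i j) => [lt_ij | le_ji].
  rewrite (_ : (i == j) = false); last by apply/negbTE; rewrite -(inj_eq val_inj) /=; lia.
  by apply: big1 => t _; apply: f_vanish; have := ltn_ord t; lia.
rewrite -(big_mkord xpredT (fun t => f (0 - i%:Z + j%:Z - 1 + t%:Z))).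
rewrite (big_cat_nat (n := (i.+1 - j)%N)) //=; last by lia.
rewrite [X in _ + X]big_nat_cond [X in _ + X]big1 ?addr0; last first.
  by move=> t /andP[/andP[le_it lt_tK] _]; apply: f_vanish; lia.
rewrite big_mkord.
rewrite (eq_bigr (fun t : 'I_(i.+1 - j) => f (- (i.+1 - j)%N%:Z + t%:Z))) => [|t _]; last first.
  by congr f; lia.
rewrite sum_fib_window; last by lia.
by congr _%:R; rewrite -(inj_eq val_inj) /=; apply/eqP/eqP; lia.
Qed.

Lemma genmat_kfib_mull s : kfib_rec K.+1 s -> forall n,
  genmat K.+1 s n = genmat K.+1 f n *m genmat K.+1 s 0.
Proof.
move=> s_rec; apply: (@eq_orbit_mulmx _ _ (fibQ int K) (genmat K.+1 f (-1))) => [|n|n|].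
- by rewrite -genmatS_mulr // addNr genmat_fib0.
- exact: genmatS_mull.
- by rewrite genmatS_mull // mulmxA.
- by rewrite genmat_fib0 mul1mx.
Qed.

Lemma genmat_kfib_mulr s : kfib_rec K.+1 s -> forall n,
  genmat K.+1 s n = genmat K.+1 s 0 *m genmat K.+1 f n.
Proof.
move=> s_rec; apply: (@eq_orbit_mulmxr _ _ (fibQ int K) (genmat K.+1 f (-1))) => [|n|n|].
- by rewrite -genmatS_mull // addNr genmat_fib0.
- exact: genmatS_mulr.
- by rewrite genmatS_mulr // mulmxA.
- by rewrite genmat_fib0 mulmx1.
Qed.

End FibonacciInit.

Theorem theorem2 (k : nat) (f l : int -> int) (n : int) :
  (1 < k)%N ->
  (* f = f_k : generalized Fibonacci sequence of order k *)
  (forall r : nat, (r < k.-1)%N -> f r%:Z = 0) ->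
  f (k.-1)%:Z = 1 ->
  (forall m : int, f (m + k%:Z) = zsum m (m + k%:Z - 1) f) ->
  (* l = l_k : generalized Lucas sequence of order k *)
  (forall m : int, l (m + k%:Z) = zsum m (m + k%:Z - 1) l) ->
  (forall r : nat, (r < k)%N -> l r%:Z = \tr (genmat k f r%:Z)) ->
  genmat k l n = genmat k f n *m genmat k l 0 /\
  genmat k l n = genmat k l 0 *m genmat k f n.
Proof.
case: k => [//|K] _ f_zero f_one f_rec l_rec _.
by split; [apply: genmat_kfib_mull | apply: genmat_kfib_mulr].
Qed.
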